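(* Let $n\ge4$ be even and $x\in Y_1$. If $1\le i\le j\le n-1$, then $\nu_i(x)\le\nu_j(x)$ in the Bruhat order of $\mathcal F_n$.
   Context: $s_i=(i,i+1)$; permutations compose right to left. $\mathcal F_m$ is the set of fixed-point-free involutions in $S_m$ with conjugation action, height $\ell/2$, and Bruhat order the weakest partial order with $z\le tzt$ for transpositions $t$ with $\ell(z)\le\ell(tzt)$. Regard $\mathcal F_{n-2}\subset S_n$; $w_0$ longest element of $S_n$; $Y_1=\{w_0zs_{n-1}w_0:z\in\mathcal F_{n-2}\}$; $\sigma_j=s_j\cdots s_1$; $\nu_j(x)=\sigma_jx\sigma_j^{-1}$. *)

(* Permutations of {1,...,n} are modelled as {perm 'I_n}
   (0-based: the point k of the paper is the ordinal k-1).
   NOTE on composition: in MathComp, (u * v) x = v (u x), i.e. the product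
   is applied LEFT TO RIGHT.  The paper composes right to left, so the
   paper's product  a b  is MathComp's  b * a. *)
From HB Require Import structures.
From mathcomp Require Import all_boot all_order all_fingroup.
From Stdlib Require Import Relations.
Set Implicit Arguments.
Unset Strict Implicit.
Unset Printing Implicit Defensive.
Local Open Scope group_scope.

(* simple transposition s_i = (i, i+1) (paper's 1-based points), 1 <= i <= n-1;
   it is the identity for out-of-range i (never used in that case). *)
Definition s_ (n i : nat) : {perm 'I_n} :=
  match @insub nat (fun k => k < n) _ i.-1, @insub nat (fun k => k < n) _ i with
  | Some a, Some b => tperm a b
  | _, _ => 1
  end.

Definition w0 (n : nat) : {perm 'I_n} := perm (@rev_ord_inj n).

(* sigma_j = s_j ... s_1 (right to left: s_1 applied first) *)
Fixpoint sigma_ (n j : nat) : {perm 'I_n} :=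
  match j with
  | 0 => 1
  | j'.+1 => sigma_ n j' * s_ n j'.+1
  end.

(* nu_j(x) = sigma_j x sigma_j^{-1} (paper order) = x ^ sigma_j in MathComp *)
Definition nu_ (n j : nat) (x : {perm 'I_n}) : {perm 'I_n} :=
  (sigma_ n j)^-1 * x * sigma_ n j.

Definition ell (n : nat) (z : {perm 'I_n}) : nat :=
  #|[set p : 'I_n * 'I_n | (p.1 < p.2)%N && (z p.2 < z p.1)%N]|.

Definition fpf_inv (n : nat) (z : {perm 'I_n}) : bool :=
  [forall k, z (z k) == k] && [forall k, z k != k].

(* z is an element of F_{m} regarded inside S_n (m <= n): an involution
   whose fixed points are exactly the points > m (1-based). *)
Definition in_F_sub (m n : nat) (z : {perm 'I_n}) : bool :=
  [forall k, z (z k) == k] && [forall k : 'I_n, (z k != k) == (k < m)%N].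

Definition is_transposition (n : nat) (t : {perm 'I_n}) : Prop :=
  exists a b : 'I_n, a != b /\ t = tperm a b.

Definition bruhat_step (n : nat) (z y : {perm 'I_n}) : Prop :=
  fpf_inv z /\ exists t, is_transposition t /\ y = t^-1 * z * t /\ (ell z <= ell y)%N.

Definition bruhatF (n : nat) (u v : {perm 'I_n}) : Prop :=
  fpf_inv u /\ fpf_inv v /\ clos_refl_trans _ (@bruhat_step n) u v.

(* Y_1 = { w0 z s_{n-1} w0 : z in F_{n-2} } (paper order),
   i.e. w0 * s_{n-1} * z * w0 in MathComp order. *)
Definition inY1 (n : nat) (x : {perm 'I_n}) : Prop :=
  exists z : {perm 'I_n}, in_F_sub n.-2 z /\ x = w0 n * s_ n n.-1 * z * w0 n.

(* For x in Y_1, a fixed-point-free involution with x(1) = 2, the conjugate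
   nu_j(x) sends j+1 to 1, the least possible value.  Hence (j+1, j+2) is
   not an inversion of nu_j(x) = nu_j(x)^-1, and conjugation by
   s_{j+1} = (j+1, j+2) maps the inversions of nu_j(x) injectively
   to inversions of nu_{j+1}(x) = s_{j+1} nu_j(x) s_{j+1}.
   Every nu_j(x) <= nu_{j+1}(x) is therefore a generating Bruhat relation,
   and chaining them from i to j gives the claim. *)

From mathcomp Require Import all_boot all_order all_fingroup zify.
From Stdlib Require Import Relations.
Set Implicit Arguments.
Unset Strict Implicit.
Local Open Scope group_scope.

Lemma tperm_adjacent_ltn n (a b u v : 'I_n) :
  val b = (val a).+1 -> (u < v)%N -> ~~ ((u == a) && (v == b)) ->
  (tperm a b u < tperm a b v)%N.
Proof.
rewrite !permE /= -!val_eqE /=.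
by do !case: eqP => /= ?; lia.
Qed.

Lemma ell_le_conj_adjacent n (w : {perm 'I_n}) (a b : 'I_n) :
  val b = (val a).+1 -> (w a < w b)%N -> (w^-1 a < w^-1 b)%N ->
  (ell w <= ell ((tperm a b)^-1 * w * tperm a b))%N.
Proof.
move=> ab wab wVab; set t := tperm a b.
have t2_inj : injective (fun p : 'I_n * 'I_n => (t p.1, t p.2)).
  by move=> [u v] [u' v'] /= [/perm_inj -> /perm_inj ->].
rewrite /ell -(card_imset _ t2_inj); apply/subset_leq_card/subsetP => p.
case/imsetP=> -[u v] + -> {p}; rewrite !inE /= !permM !permK => /andP[uv wvu].
apply/andP; split; apply: tperm_adjacent_ltn => //; apply/negP => /andP[/eqP eu /eqP ev].
- by move: wvu; rewrite eu ev ltnNge ltnW.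
- by move: uv; rewrite -(permK w u) -(permK w v) eu ev ltnNge ltnW.
Qed.

Lemma fpf_invV n (w : {perm 'I_n}) : fpf_inv w -> w^-1 = w.
Proof.
case/andP=> /forallP wK _; apply/permP => k.
by apply: (@perm_inj _ w); rewrite permKV (eqP (wK k)).
Qed.

Lemma fpf_inv_conj n (w c : {perm 'I_n}) : fpf_inv w -> fpf_inv (c^-1 * w * c).
Proof.
case/andP=> /forallP wK /forallP w_fpf; apply/andP; split; apply/forallP => k.
  by rewrite !permM permK (eqP (wK _)) permKV.
rewrite !permM; apply: contra (w_fpf (c^-1 k)) => /eqP wk.
by rewrite -{2}wk permK.
Qed.

Lemma bruhat_step_adjacent n (w : {perm 'I_n}) (a b : 'I_n) :
  fpf_inv w -> val b = (val a).+1 -> val (w a) = 0%N ->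
  bruhat_step w ((tperm a b)^-1 * w * tperm a b).
Proof.
move=> w_fpf ab wa0; split=> //; exists (tperm a b); split.
  by exists a, b; split=> //; rewrite -val_eqE ab neq_ltn ltnSn.
split=> //; have wab : (w a < w b)%N.
  rewrite wa0 lt0n; apply/eqP => wb0.
  have /perm_inj ba : w b = w a by apply: val_inj; rewrite /= wb0 wa0.
  by move: ab; rewrite ba; lia.
by apply: ell_le_conj_adjacent; rewrite ?fpf_invV.
Qed.

Lemma s_E n (a b : 'I_n) : val b = (val a).+1 -> s_ n b = tperm a b.
Proof.
move=> ab; have b_lt : ((val a).+1 < n)%N by rewrite -ab ltn_ord.
rewrite /s_ ab /= (insubT (fun k => k < n)%N (ltn_ord a)) (insubT (fun k => k < n)%N b_lt).
by congr tperm; apply: val_inj.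
Qed.

Lemma s_val n k (k1_lt : (k.+1 < n)%N) (c : 'I_n) :
  val (s_ n k.+1 c) = if val c == k then k.+1 else if val c == k.+1 then k else val c.
Proof.
rewrite (@s_E _ (Ordinal (ltnW k1_lt)) (Ordinal k1_lt)) // permE /= -!val_eqE /=.
by do !case: ifP.
Qed.

Lemma sigma_S n j : sigma_ n j.+1 = sigma_ n j * s_ n j.+1.
Proof. by []. Qed.

Lemma sigma_val0 n j (c : 'I_n) : (j < n)%N -> val c = 0%N -> val (sigma_ n j c) = j.
Proof.
move=> + c0; elim: j => [|j IH] j_lt; first by rewrite perm1.
by rewrite sigma_S permM s_val // IH ?eqxx // ltnW.
Qed.

Lemma sigma_val1 n j (c : 'I_n) : (0 < j < n)%N -> val c = 1%N -> val (sigma_ n j c) = 0%N.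
Proof.
move=> /andP[+ +] c1; elim: j => [//|[|j] IH] _ j_lt.
  by rewrite sigma_S mul1g s_val // c1.
by rewrite sigma_S permM s_val // IH // ltnW.
Qed.

Lemma nu_S n j (x : {perm 'I_n}) :
  nu_ j.+1 x = (s_ n j.+1)^-1 * nu_ j x * s_ n j.+1.
Proof. by rewrite /nu_ sigma_S invMg !mulgA. Qed.

Lemma nu_val n j (x : {perm 'I_n}) (c : 'I_n) : (0 < j < n)%N ->
  (forall d : 'I_n, val d = 0%N -> val (x d) = 1%N) -> val c = j -> val (nu_ j x c) = 0%N.
Proof.
move=> /andP[j_gt0 j_lt] x01 cj.
have o0_lt : (0 < n)%N by apply: leq_ltn_trans j_lt.
have -> : c = sigma_ n j (Ordinal o0_lt) by apply: val_inj; rewrite /= sigma_val0.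
by rewrite /nu_ !permM permK sigma_val1 ?j_gt0 // x01.
Qed.

Lemma w0_val n (k : 'I_n) : val (w0 n k) = (n - k.+1)%N.
Proof. by rewrite permE. Qed.

Lemma w0V n : (w0 n)^-1 = w0 n.
Proof.
apply/permP => k; apply: (@perm_inj _ (w0 n)); rewrite permKV.
by apply: val_inj; rewrite /= !w0_val; case: k => k /= k_lt; lia.
Qed.

Section FixedPointFreeBelow.

Variables (m n : nat) (z : {perm 'I_n}).
Hypothesis zF : in_F_sub m z.

Lemma F_subK : involutive z.
Proof. by case/andP: zF => /forallP zK _ k; apply/eqP. Qed.

Lemma F_sub_fix (k : 'I_n) : (m <= k)%N -> z k = k.
Proof.
move=> mk; case/andP: zF => _ /forallP/(_ k).
by rewrite ltnNge mk => /eqP/negbFE/eqP.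
Qed.

Lemma F_sub_ltn (k : 'I_n) : (k < m)%N -> (z k < m)%N.
Proof.
move=> k_lt; rewrite ltnNge; apply/negP => m_zk.
have kz : k = z k by rewrite -{1}(F_subK k) (F_sub_fix m_zk).
by move: m_zk; rewrite -kz leqNgt k_lt.
Qed.

Lemma F_sub_commute_tperm (a b : 'I_n) :
  (m <= a)%N -> (m <= b)%N -> commute z (tperm a b).
Proof.
move=> ma mb; apply/permP => k; rewrite !permM.
have [mk | km] := leqP m k.
  by rewrite !F_sub_fix //; case: tpermP => [_|_|_ _].
have mD (l : 'I_n) : (l < m)%N -> tperm a b l = l.
  by move=> lm; rewrite tpermD // -val_eqE neq_ltn (leq_trans lm) ?orbT.
by rewrite !mD // F_sub_ltn.
Qed.

Lemma fpf_inv_tperm_F_sub (a b : 'I_n) :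
  n = m.+2 -> val a = m -> val b = m.+1 -> fpf_inv (tperm a b * z).
Proof.
move=> n_eq am bm; have [ma mb] : (m <= a)%N /\ (m <= b)%N by rewrite am bm.
have tz l : tperm a b (z l) = z (tperm a b l).
  by rewrite -permM (F_sub_commute_tperm ma mb) permM.
apply/andP; split; apply/forallP => k; rewrite !permM.
  by rewrite tz tpermK F_subK.
have [mk | km] := leqP m k; last first.
  have [ak bk] : a != k /\ b != k by rewrite -!val_eqE /= am bm; split; lia.
  by rewrite tpermD //; case/andP: zF => _ /forallP/(_ k)/eqP ->.
have mt : (m <= tperm a b k)%N by case: tpermP => [_|_|_ _].
rewrite (F_sub_fix mt).
have : (k == a) || (k == b).
  by rewrite -!val_eqE /= am bm; move: (ltn_ord k); lia.
by case/orP=> /eqP ->; rewrite ?tpermL ?tpermR -val_eqE am bm; lia.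
Qed.

End FixedPointFreeBelow.

Section Y1.

Variables (n : nat) (x : {perm 'I_n}).
Hypotheses (n_ge2 : (2 <= n)%N) (x_Y1 : inY1 x).

Let a_lt : (n.-2 < n)%N. Proof. lia. Qed.
Let b_lt : (n.-1 < n)%N. Proof. lia. Qed.
Let a : 'I_n := Ordinal a_lt.
Let b : 'I_n := Ordinal b_lt.

Lemma inY1E : exists2 z, in_F_sub n.-2 z & x = (w0 n)^-1 * (tperm a b * z) * w0 n.
Proof.
case: x_Y1 => z [zF ->]; exists z => //.
by rewrite w0V -(@s_E _ a b) /= ?mulgA //; lia.
Qed.

Lemma inY1_fpf : fpf_inv x.
Proof.
have [z zF ->] := inY1E; apply/fpf_inv_conj/(fpf_inv_tperm_F_sub zF) => //=; lia.
Qed.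

Lemma inY1_val0 (c : 'I_n) : val c = 0%N -> val (x c) = 1%N.
Proof.
move=> c0; have [z zF ->] := inY1E.
have w0c : w0 n c = b by apply: val_inj; rewrite w0_val /= c0; lia.
rewrite w0V !permM w0c tpermR (F_sub_fix zF) ?w0_val //=; lia.
Qed.

End Y1.

Lemma clos_refl_trans_chain (T : Type) (R : relation T) (f : nat -> T) (i j : nat) :
  (i <= j)%N -> (forall k, (i <= k < j)%N -> R (f k) (f k.+1)) ->
  clos_refl_trans _ R (f i) (f j).
Proof.
move=> /subnK <-; elim: (j - i)%N => [|d IH] step; first exact: rt_refl.
apply: rt_trans (IH _) (rt_step _ _ _ _ (step _ _)); last lia.
by move=> k ik; apply: step; lia.
Qed.

Theorem corollary3p6 (n : nat) (x : {perm 'I_n}) (i j : nat) :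
  ~~ odd n -> (4 <= n)%N -> inY1 x ->
  (1 <= i)%N -> (i <= j)%N -> (j <= n.-1)%N ->
  bruhatF (nu_ i x) (nu_ j x).
Proof.
move=> _ n_ge4 x_Y1 i_ge1 ij j_le.
have n_ge2 : (2 <= n)%N by lia.
have nu_fpf k : fpf_inv (nu_ k x) by apply/fpf_inv_conj/inY1_fpf.
split; [exact: nu_fpf | split; [exact: nu_fpf |]].
apply: (clos_refl_trans_chain (f := fun k => nu_ k x) ij) => k /andP[ik kj].
have k_lt : (k < n)%N by lia.
have k1_lt : (k.+1 < n)%N by lia.
rewrite nu_S (@s_E _ (Ordinal k_lt) (Ordinal k1_lt)) //.
apply: bruhat_step_adjacent => //; apply: nu_val => //; first lia.
exact: inY1_val0.
Qed.
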